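(* Let $m\ge 2$ and let $a_1,a_2,b_1,\dots,b_m,c_1,\dots,c_m\in\mathbb{C}$ satisfy $a_1\ne a_2$, $b_i\ne b_j$ and $c_i\ne c_j$ for $i\ne j$, and $a_1+(m-1)a_2=\sum_{i=1}^m(b_i+c_i)$. Define $m\times m$ matrices by $B_{ij}=b_i+c_{m+1-i}-a_2$ for $i<j$, $B_{ii}=b_i$, $B_{ij}=0$ for $i>j$; $C_{ij}=0$ for $i<j$, $C_{ii}=c_{m+1-i}$, $C_{ij}=b_i+c_{m+1-i}-a_2$ for $i>j$; and ${\bf A}={\bf B}+{\bf C}$. For $i=1,\dots,m$ let ${\bf v}_i$ be the eigenvector of ${\bf B}$ with eigenvalue $b_i$ whose $i$-th coordinate is $1$ and whose later coordinates are $0$. Assume $b_i+c_k-a_2\ne 0$ for all $i,k$, and define a symmetric bilinear form $\langle\cdot,\cdot\rangle$ on $\mathbb{C}^m$ by $\langle{\bf v}_i,{\bf v}_j\rangle=0$ for $i\ne j$ and $$\langle{\bf v}_i,{\bf v}_i\rangle=\frac{\prod_{k=i+1}^m(b_i-b_k)}{\prod_{k=1}^{i-1}(b_i-b_k)}\cdot\frac{\prod_{k=m+2-i}^m(b_i+c_k-a_2)}{\prod_{k=1}^{m+1-i}(b_i+c_k-a_2)}.$$ Then ${\bf A}$, ${\bf B}$ and ${\bf C}$ are self-adjoint with respect to $\langle\cdot,\cdot\rangle$.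
   Context: Empty products equal $1$. Coordinates are with respect to the standard basis of $\mathbb{C}^m$. *)

From HB Require Import structures.
From mathcomp Require Import all_boot all_order all_algebra.
From mathcomp Require Import complex.
From mathcomp Require Import reals.
Set Implicit Arguments. Unset Strict Implicit. Unset Printing Implicit Defensive.
Import Order.TTheory GRing.Theory Num.Theory.
Local Open Scope ring_scope.
Local Open Scope complex_scope.

(* Indices are 0-based: paper index i (1..m) corresponds to ordinal i-1.
   Paper's c_{m+1-i} corresponds to c (rev_ord i). *)

Section Defs.
Variables (F : fieldType) (m : nat).
Implicit Types (b c : 'I_m -> F).

Definition Bmx b c (a2 : F) : 'M[F]_m :=
  \matrix_(i, j) (if (i < j)%N then b i + c (rev_ord i) - a2
                  else if i == j then b i else 0).

Definition Cmx b c (a2 : F) : 'M[F]_m :=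
  \matrix_(i, j) (if (i < j)%N then 0
                  else if i == j then c (rev_ord i)
                  else b i + c (rev_ord i) - a2).

Definition Amx b c (a2 : F) : 'M[F]_m := Bmx b c a2 + Cmx b c a2.

(* <v_i, v_i> ; 0-based: the paper's product over k = m+2-i .. m becomes
   k' >= m - i', and over k = 1 .. m+1-i becomes k' < m - i'. *)
Definition vnorm b c (a2 : F) (i : 'I_m) : F :=
  (\prod_(k < m | (i < k)%N) (b i - b k)) / (\prod_(k < m | (k < i)%N) (b i - b k))
  * ((\prod_(k < m | (m - i <= k)%N) (b i + c k - a2))
     / (\prod_(k < m | (k < m - i)%N) (b i + c k - a2))).

Definition selfadjoint (G M : 'M[F]_m) : Prop :=
  forall x y : 'cV[F]_m, (M *m x)^T *m G *m y = x^T *m G *m (M *m y).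
End Defs.

(* Write d_l = b_l + c_(m+1-l) - a_2.  Then A = a_2 I + d 1^T and C = A - B,
   so it suffices to treat B and A.  The v_j are eigenvectors of B forming a
   basis that is orthogonal for the form, hence B is self-adjoint.  For A it
   suffices that G d = 1, the all-ones vector.  The eigen-equation determines
   the tail sums of the coordinates of v_j,
     sum_(l >= k) v_j(l) = prod_(k <= l < j) (b_j + c_(m+1-l) - a_2) / (b_j - b_l),
   and comparing tail sums shows that the coordinates of d in the basis (v_j)
   are (sum_l v_j(l)) / <v_j, v_j>, which is G d = 1.  That comparison is the
   partial-fraction identity
     sum_j prod_l (x_j - y_l) / prod_(l <> j) (x_j - x_l) = sum_l (x_l - y_l),
   read off from the coefficient of X^(n-1) in the Lagrange interpolation of
   prod_l (X - y_l) - prod_l (X - x_l) at the x_j. *)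

From HB Require Import structures.
From mathcomp Require Import all_boot all_order all_algebra.
From mathcomp Require Import complex.
From mathcomp Require Import reals.
From mathcomp Require Import zify ring.
Import Order.TTheory GRing.Theory Num.Theory.
Set Implicit Arguments. Unset Strict Implicit. Unset Printing Implicit Defensive.
Local Open Scope ring_scope.

Lemma size_monicB (R : nzRingType) (p q : {poly R}) n :
  p \is monic -> q \is monic -> size p = n.+1 -> size q = n.+1 ->
  (size (p - q)%R <= n)%N.
Proof.
move=> /monicP lp /monicP lq sp sq; apply/leq_sizeP => i ni; rewrite coefB.
have [->|n_lt_i] := eqVneq i n.
  by move: lp lq; rewrite /lead_coef sp sq /= => -> ->; rewrite subrr.
by rewrite !nth_default ?subrr // ?sp ?sq ltn_neqAle eq_sym n_lt_i.
Qed.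

Section Interpolation.
Variables (F : fieldType) (T : eqType) (rs : seq T) (x : T -> F).
Hypotheses (rs_uniq : uniq rs) (x_inj : {in rs &, injective x}).

Lemma interpolation_subleading_coef (p : {poly F}) : (size p <= size rs)%N ->
  p`_(size rs).-1 = \sum_(j <- rs) p.[x j] / \prod_(l <- rs | l != j) (x j - x l).
Proof.
move=> size_p.
pose L j := \prod_(l <- rs | l != j) ('X - (x l)%:P).
have L_at j : (L j).[x j] = \prod_(l <- rs | l != j) (x j - x l).
  by rewrite horner_prod; apply: eq_bigr => l _; rewrite hornerXsubC.
have L_neq0 j : j \in rs -> (L j).[x j] != 0.
  move=> j_rs; rewrite L_at prodf_seq_neq0; apply/allP => l l_rs.
  by apply/implyP; apply: contra => /eqP/subr0_eq/(x_inj j_rs l_rs)->.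
have L_eq0 i j : j \in rs -> i != j -> (L i).[x j] = 0.
  move=> j_rs ij; rewrite horner_prod (big_rem j) //= eq_sym ij.
  by rewrite hornerXsubC subrr mul0r.
have size_L j : j \in rs -> size (L j) = size rs.
  move=> j_rs; have rs_gt0 : (0 < size rs)%N by move: j_rs; case: (rs).
  by rewrite /L -big_filter size_prod_XsubC -rem_filter // size_rem // prednK.
pose q := \sum_(j <- rs) (p.[x j] / (L j).[x j]) *: L j.
have q_at j : j \in rs -> q.[x j] = p.[x j].
  move=> j_rs; rewrite horner_sum (big_rem j) //= hornerZ mulfVK ?L_neq0 //.
  rewrite big_seq_cond big1 ?addr0 // => i /andP[i_rem _].
  have /andP[ij _] : i \in [predD1 rs & j] by rewrite -mem_rem_uniq.
  by rewrite hornerZ (L_eq0 i j j_rs ij) mulr0.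
have size_q : (size q <= size rs)%N.
  rewrite /q big_seq; apply: (big_ind (fun r : {poly F} => size r <= size rs)%N).
  - by rewrite size_poly0.
  - by move=> r s r_le s_le; rewrite (leq_trans (size_polyD _ _)) // geq_max r_le.
  - by move=> j j_rs; rewrite (leq_trans (size_scale_leq _ _)) ?size_L.
have p_eq_q : p = q.
  apply/eqP; rewrite -subr_eq0; apply/eqP.
  apply: (@roots_geq_poly_eq0 _ _ (map x rs)).
  - apply/allP => _ /mapP[j j_rs ->].
    by rewrite /root hornerD hornerN q_at // subrr.
  - by rewrite map_inj_in_uniq.
  - by rewrite size_map (leq_trans (size_polyD _ _)) // size_polyN geq_max size_p.
rewrite [in LHS]p_eq_q coef_sum big_seq [RHS]big_seq; apply: eq_bigr => j j_rs.
have L_monic : (L j)`_(size rs).-1 = 1.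
  by rewrite -(size_L j j_rs); apply: lead_coef_prod_XsubC.
by rewrite coefZ L_monic mulr1 L_at.
Qed.

Lemma sum_prod_div_prod (y : T -> F) :
  \sum_(j <- rs) (\prod_(l <- rs) (x j - y l)) / \prod_(l <- rs | l != j) (x j - x l)
  = \sum_(l <- rs) (x l - y l).
Proof.
have [->|rs_neq0] := eqVneq rs [::]; first by rewrite !big_nil.
pose P (z : T -> F) := \prod_(l <- rs) ('X - (z l)%:P).
have size_P z : size (P z) = (size rs).+1 by apply: size_prod_XsubC.
have coefP z : (P z)`_(size rs).-1 = - \sum_(l <- rs) z l.
  rewrite /P -(big_map z predT (fun u => 'X - u%:P)) -(size_map z).
  by rewrite coefPn_prod_XsubC ?size_map ?size_eq0 ?big_map.
have size_PyPx : (size (P y - P x)%R <= size rs)%N.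
  by rewrite size_monicB ?monic_prod_XsubC ?size_P.
have -> : \sum_(l <- rs) (x l - y l) = (P y - P x)`_(size rs).-1.
  by rewrite coefB !coefP sumrB opprK addrC.
rewrite (interpolation_subleading_coef size_PyPx).
rewrite big_seq [RHS]big_seq; apply: eq_bigr => j j_rs; congr (_ / _).
have Px_at : (P x).[x j] = 0.
  by rewrite horner_prod (big_rem j) //= hornerXsubC subrr mul0r.
rewrite hornerD hornerN Px_at subr0 horner_prod.
by apply: eq_bigr => l _; rewrite hornerXsubC.
Qed.
End Interpolation.

Section SelfAdjointness.
Variables (F : fieldType) (m : nat).
Implicit Types (G M V : 'M[F]_m).

Lemma selfadjoint_comm G M : M^T *m G = G *m M -> selfadjoint G M.
Proof.
by move=> MG x y; rewrite trmx_mul -[x^T *m M^T *m G]mulmxA MG !mulmxA.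
Qed.

Lemma gram_comm_eigenbasis G M V (d lambda : 'rV[F]_m) :
  V \in unitmx -> V^T *m G *m V = diag_mx d -> M *m V = V *m diag_mx lambda ->
  M^T *m G = G *m M.
Proof.
move=> V_unit VGV MV; have VT_unit : V^T \in unitmx by rewrite unitmx_tr.
apply: (can_inj (mulKmx VT_unit)); apply: (can_inj (mulmxK V_unit)).
have -> : V^T *m (M^T *m G) *m V = diag_mx lambda *m diag_mx d.
  by rewrite mulmxA -trmx_mul MV trmx_mul tr_diag_mx -VGV !mulmxA.
have -> : V^T *m (G *m M) *m V = diag_mx d *m diag_mx lambda.
  by rewrite -VGV -!mulmxA MV.
exact: diag_mxC.
Qed.

Lemma gram_comm_scalar_rank1 G (u w : 'cV[F]_m) (a : F) :
  G^T = G -> G *m u = w ->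
  (a%:M + u *m w^T)^T *m G = G *m (a%:M + u *m w^T).
Proof.
move=> G_sym Gu.
rewrite raddfD /= tr_scalar_mx trmx_mul trmxK mulmxDl mulmxDr.
by rewrite mul_scalar_mx mul_mx_scalar -mulmxA -G_sym -trmx_mul G_sym Gu mulmxA Gu.
Qed.

Lemma gram_diag G V (d : 'I_m -> F) :
  (forall i j, (col i V)^T *m G *m col j V = (if i == j then d i else 0)%:M) ->
  V^T *m G *m V = diag_mx (\row_i d i).
Proof.
move=> gram; apply/matrixP => i j.
have := congr1 (fun A : 'M_1 => A 0 0) (gram i j).
rewrite tr_col -row_mul colE mulmxA -colE -row_mul !mxE => ->.
by case: eqVneq => [->|]; rewrite ?mulr1n ?mulr0n.
Qed.

End SelfAdjointness.

Section TailSums.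
Variables (F : fieldType) (m : nat).
Implicit Types x y : 'cV[F]_m.

Definition tailsum x (k : nat) : F := \sum_(l < m | (k <= l)%N) x l 0.

Lemma tailsumS x (l : 'I_m) : tailsum x l = x l 0 + tailsum x l.+1.
Proof.
rewrite /tailsum (bigD1 l) //=; congr (_ + _); apply: eq_bigl => i.
by rewrite -val_eqE /=; apply/idP/idP; lia.
Qed.

Lemma tailsum_ge x k : (m <= k)%N -> tailsum x k = 0.
Proof.
by move=> m_le_k; rewrite /tailsum big1 // => i /= k_le_i; have := ltn_ord i; lia.
Qed.

Lemma tailsum_inj x y : (forall k : 'I_m, tailsum x k = tailsum y k) -> x = y.
Proof.
move=> tails_eq; apply/matrixP => l j; rewrite (ord1 j) {j}.
have tailsS_eq : tailsum x l.+1 = tailsum y l.+1.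
  have [l_lt_m|m_le_l] := ltnP l.+1 m; last by rewrite !tailsum_ge.
  exact: (tails_eq (Ordinal l_lt_m)).
by apply: (addIr (tailsum x l.+1)); rewrite -tailsumS tailsS_eq -tailsumS.
Qed.

Lemma tailsum_mulmx (V : 'M[F]_m) (w : 'cV[F]_m) k :
  tailsum (V *m w) k = \sum_j w j 0 * tailsum (col j V) k.
Proof.
rewrite /tailsum; under eq_bigr do rewrite mxE.
rewrite exchange_big; apply: eq_bigr => j _; rewrite mulr_sumr.
by apply: eq_bigr => l _; rewrite mxE mulrC.
Qed.

End TailSums.

Section TriangularModel.
Variables (F : fieldType) (m : nat) (b c : 'I_m -> F) (a2 : F).
Local Notation B := (Bmx b c a2).

Definition gap (j l : 'I_m) : F := b j + c (rev_ord l) - a2.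

Definition gapcol : 'cV[F]_m := \col_l gap l l.

Lemma Amx_rank1 : Amx b c a2 = a2%:M + gapcol *m (const_mx 1 : 'cV[F]_m)^T.
Proof.
apply/matrixP => i j; rewrite !mxE big_ord1 !mxE /gap.
by rewrite -!val_eqE /=; case: ltngtP => _; rewrite ?mulr1n ?mulr0n; ring.
Qed.

Lemma Bmx_mul_row (x : 'cV[F]_m) (l : 'I_m) :
  (B *m x) l 0 = b l * x l 0 + gap l l * tailsum x l.+1.
Proof.
rewrite mxE (bigD1 l) //= mxE ltnn eqxx; congr (_ + _).
rewrite /tailsum mulr_sumr big_mkcond [RHS]big_mkcond; apply: eq_bigr => i _.
rewrite mxE; have [l_lt_i|i_le_l] := ltnP l i.
  by rewrite -val_eqE /= gtn_eqF.
by rewrite eq_sym; case: eqVneq; rewrite ?mul0r.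
Qed.

Lemma eigenvector_tailsumS (j l : 'I_m) (x : 'cV[F]_m) :
  B *m x = b j *: x -> b j != b l ->
  tailsum x l = gap j l / (b j - b l) * tailsum x l.+1.
Proof.
move=> x_eigen bjl; have bjl_neq0 : b j - b l != 0 by rewrite subr_eq0.
have := Bmx_mul_row x l; rewrite x_eigen !mxE => row_l.
have x_l : x l 0 = gap l l * tailsum x l.+1 / (b j - b l).
  by apply: (mulIf bjl_neq0); rewrite mulfVK // mulrBr [x l 0 * _]mulrC row_l; ring.
by rewrite tailsumS x_l /gap; field.
Qed.

Lemma eigenvector_tailsum (j : 'I_m) (x : 'cV[F]_m) :
  injective b -> B *m x = b j *: x -> x j 0 = 1 ->
  (forall k : 'I_m, (j < k)%N -> x k 0 = 0) ->
  forall k, (k <= j)%N ->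
  tailsum x k = \prod_(l < m | (k <= l < j)%N) (gap j l / (b j - b l)).
Proof.
move=> b_inj x_eigen x_j x_gt_j.
have tailsum_j : tailsum x j = 1.
  by rewrite tailsumS x_j /tailsum big1 ?addr0 // => i /x_gt_j.
suff tailsum_at t k : (k + t)%N = j ->
    tailsum x k = \prod_(l < m | (k <= l < j)%N) (gap j l / (b j - b l)).
  by move=> k k_le_j; apply: (tailsum_at (j - k)%N); lia.
elim: t k => [|t IH] k kt_j.
  rewrite -kt_j addn0 in tailsum_j *; rewrite tailsum_j big1 // => l; lia.
have k_lt_m : (k < m)%N by have := ltn_ord j; lia.
pose ko := Ordinal k_lt_m.
have bjk : b j != b ko by rewrite (inj_eq b_inj) -val_eqE /=; lia.
rewrite (eigenvector_tailsumS x_eigen bjk) (IH k.+1); last by lia.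
rewrite [RHS](bigD1 ko) /=; last by lia.
by congr (_ * _); apply: eq_bigl => l; rewrite -val_eqE /=; apply/idP/idP; lia.
Qed.

End TriangularModel.

Section Eigenbasis.
Variables (F : fieldType) (m : nat) (b c : 'I_m -> F) (a2 : F).
Variable v : 'I_m -> 'cV[F]_m.
Hypotheses (b_inj : injective b)
  (v_eigen : forall i, Bmx b c a2 *m v i = b i *: v i)
  (v_diag : forall i, v i i 0 = 1)
  (v_upper : forall i k : 'I_m, (i < k)%N -> v i k 0 = 0).

Definition eigmx : 'M[F]_m := \matrix_(k, j) v j k 0.

Lemma col_eigmx j : col j eigmx = v j.
Proof. by apply/matrixP => k i; rewrite (ord1 i) !mxE. Qed.

Lemma eigmx_unit : eigmx \in unitmx.
Proof.
rewrite unitmxE -det_tr det_trig; last first.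
  by apply/is_trig_mxP => i j ij; rewrite !mxE v_upper.
by rewrite big1 ?unitr1 // => i _; rewrite !mxE v_diag.
Qed.

Lemma Bmx_eigmx : Bmx b c a2 *m eigmx = eigmx *m diag_mx (\row_j b j).
Proof.
apply/matrixP => k j; rewrite mul_mx_diag !mxE mulrC.
have := congr1 (fun x : 'cV_m => x k 0) (v_eigen j); rewrite !mxE => <-.
by apply: eq_bigr => l _; rewrite !mxE.
Qed.

Lemma tailsum_eigenvector (j : 'I_m) k : tailsum (v j) k =
  if (k <= j)%N then \prod_(l < m | (k <= l < j)%N) (gap b c a2 j l / (b j - b l)) else 0.
Proof.
case: leqP => [k_le_j|j_lt_k].
  exact: (eigenvector_tailsum b_inj (v_eigen j) (v_diag j) (@v_upper j)).
by rewrite /tailsum big1 // => l k_le_l; apply: v_upper; lia.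
Qed.

Definition gapcoord (j : 'I_m) : F :=
  \prod_(l < m | (j <= l)%N) gap b c a2 j l / \prod_(l < m | (j < l)%N) (b j - b l).

Lemma gapcol_eigmx : gapcol b c a2 = eigmx *m \col_j gapcoord j.
Proof.
apply: tailsum_inj => k; rewrite tailsum_mulmx.
under eq_bigr do
  rewrite col_eigmx tailsum_eigenvector mxE (fun_if (GRing.mul _)) mulr0.
rewrite -big_mkcond /tailsum.
transitivity (\sum_(l < m | (k <= l)%N) (b l - (a2 - c (rev_ord l)))).
  by apply: eq_bigr => l _; rewrite mxE /gap; ring.
pose rs := [seq l : 'I_m <- index_enum 'I_m | (k <= l)%N].
have rs_uniq : uniq rs by rewrite filter_uniq ?index_enum_uniq.
rewrite -[LHS]big_filter -(sum_prod_div_prod rs_uniq (in2W b_inj)) big_filter.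
apply: eq_bigr => j k_le_j; rewrite !big_filter big_filter_cond /gapcoord prodf_div.
have num_split : \prod_(l < m | (k <= l)%N) (b j - (a2 - c (rev_ord l)))
    = \prod_(l < m | (k <= l < j)%N) gap b c a2 j l
      * \prod_(l < m | (j <= l)%N) gap b c a2 j l.
  rewrite (bigID (fun l : 'I_m => (l < j)%N)) /=; congr (_ * _).
    by apply: eq_bigr => l _; rewrite /gap; ring.
  by apply: eq_big => [l|l _]; [apply/idP/idP; lia | rewrite /gap; ring].
have den_split : \prod_(l < m | (k <= l)%N && (l != j)) (b j - b l)
    = \prod_(l < m | (k <= l < j)%N) (b j - b l)
      * \prod_(l < m | (j < l)%N) (b j - b l).
  rewrite (bigID (fun l : 'I_m => (l < j)%N)) /=.
  by congr (_ * _); apply: eq_bigl => l; rewrite -val_eqE /=; apply/idP/idP; lia.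
by rewrite num_split den_split invfM; ring.
Qed.

Variable G : 'M[F]_m.
Hypotheses (G_sym : G^T = G)
  (G_gram : eigmx^T *m G *m eigmx = diag_mx (\row_j vnorm b c a2 j))
  (gap_neq0 : forall i k, b i + c k - a2 != 0).

Lemma vnorm_gapcoord j : vnorm b c a2 j * gapcoord j = tailsum (v j) 0.
Proof.
have b_neq (l : 'I_m) : l != j -> b j - b l != 0.
  by rewrite subr_eq0 eq_sym (inj_eq b_inj).
have lt_neq (l : 'I_m) : (l < j)%N || (j < l)%N -> l != j.
  by rewrite -val_eqE /=; lia.
have num_lo : \prod_(k < m | (m - j <= k)%N) (b j + c k - a2)
    = \prod_(l < m | (l < j)%N) gap b c a2 j l.
  rewrite (reindex_inj rev_ord_inj); apply: eq_bigl => l /=.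
  by have := ltn_ord l; have := ltn_ord j; lia.
have num_hi : \prod_(k < m | (k < m - j)%N) (b j + c k - a2)
    = \prod_(l < m | (j <= l)%N) gap b c a2 j l.
  rewrite (reindex_inj rev_ord_inj); apply: eq_bigl => l /=.
  by have := ltn_ord l; have := ltn_ord j; lia.
have den_lo_neq0 : \prod_(l < m | (l < j)%N) (b j - b l) != 0.
  by apply/prodf_neq0 => l l_lt_j; rewrite b_neq // lt_neq ?l_lt_j.
have den_hi_neq0 : \prod_(l < m | (j < l)%N) (b j - b l) != 0.
  by apply/prodf_neq0 => l j_lt_l; rewrite b_neq // lt_neq ?j_lt_l ?orbT.
have num_hi_neq0 : \prod_(l < m | (j <= l)%N) gap b c a2 j l != 0.
  by apply/prodf_neq0 => l _; apply: gap_neq0.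
rewrite tailsum_eigenvector /= prodf_div /vnorm /gapcoord num_lo num_hi.
by field; rewrite den_lo_neq0 den_hi_neq0 num_hi_neq0.
Qed.

Lemma gram_mul_gapcol : G *m gapcol b c a2 = const_mx 1.
Proof.
have VT_unit : eigmx^T \in unitmx by rewrite unitmx_tr eigmx_unit.
apply: (can_inj (mulKmx VT_unit)); rewrite gapcol_eigmx !mulmxA G_gram.
apply/matrixP => j z; rewrite (ord1 z) mul_diag_mx !mxE vnorm_gapcoord.
by rewrite -col_eigmx /tailsum big_mkcond; apply: eq_bigr => i _; rewrite !mxE mulr1.
Qed.

Lemma selfadjoint_Amx_Bmx_Cmx :
  [/\ selfadjoint G (Amx b c a2), selfadjoint G (Bmx b c a2)
     & selfadjoint G (Cmx b c a2)].
Proof.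
have B_comm := gram_comm_eigenbasis eigmx_unit G_gram Bmx_eigmx.
have A_comm : (Amx b c a2)^T *m G = G *m Amx b c a2.
  by rewrite Amx_rank1; apply: gram_comm_scalar_rank1 G_sym gram_mul_gapcol.
have C_comm : (Cmx b c a2)^T *m G = G *m Cmx b c a2.
  have -> : Cmx b c a2 = Amx b c a2 - Bmx b c a2 by rewrite /Amx addrAC subrr add0r.
  by rewrite raddfB /= mulmxBl mulmxBr A_comm B_comm.
by split; apply: selfadjoint_comm.
Qed.

End Eigenbasis.

Theorem theorem2p6 (R : realType) (m : nat) (a1 a2 : R[i]) (b c : 'I_m -> R[i])
  (v : 'I_m -> 'cV[R[i]]_m) (G : 'M[R[i]]_m) :
  (2 <= m)%N ->
  a1 != a2 ->
  injective b ->
  injective c ->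
  a1 + (m.-1)%:R * a2 = \sum_(i < m) (b i + c i) ->
  (forall i k : 'I_m, b i + c k - a2 != 0) ->
  (* v i is the eigenvector of B for b i with i-th coordinate 1 and later ones 0 *)
  (forall i : 'I_m, Bmx b c a2 *m v i = b i *: v i) ->
  (forall i : 'I_m, v i i 0 = 1) ->
  (forall i k : 'I_m, (i < k)%N -> v i k 0 = 0) ->
  (* <x,y> = x^T G y is the symmetric bilinear form with the prescribed values *)
  G^T = G ->
  (forall i j : 'I_m, (v i)^T *m G *m v j
                      = (if i == j then vnorm b c a2 i else 0)%:M) ->
  [/\ selfadjoint G (Amx b c a2), selfadjoint G (Bmx b c a2)
    & selfadjoint G (Cmx b c a2)].
Proof.
move=> _ _ b_inj _ _ gap_neq0 v_eigen v_diag v_upper G_sym v_gram.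
apply: (selfadjoint_Amx_Bmx_Cmx b_inj v_eigen v_diag v_upper G_sym _ gap_neq0).
by apply: gram_diag => i j; rewrite !col_eigmx.
Qed.
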